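(* For every $d\geq1$ and $\delta>0$ there is a constant $C(d,\delta)$ such that: for every box $B=\prod_{k=1}^d[a_k,b_k]\subset\mathbb{R}^d$, every integer $n\geq1$, and every measure $\mu$ with density $h$ w.r.t. Lebesgue measure satisfying $\delta\leq h\leq\delta^{-1}$ (on $B$), there exists a partition $(B_1,\dots,B_n)$ of $B$ into $n$ sub-boxes such that $\mu(B_i)=\frac1n\mu(B)$ for all $i$, and $$\frac{l(B)}{C(d,\delta)n^{1/d}}\leq l(B_i)\leq L(B_i)\leq\frac{C(d,\delta)}{n^{1/d}}L(B)\quad\text{for all }i.$$
   Context: For a box $B=\prod_{k=1}^d[a_k,b_k]$, $l(B)=\min_k(b_k-a_k)$ and $L(B)=\max_k(b_k-a_k)$ are its minimal and maximal edge lengths. Sub-boxes forming a partition may share boundary faces (of Lebesgue measure zero). *)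

From HB Require Import structures.
From mathcomp Require Import all_boot all_order all_algebra.
From mathcomp Require Import all_classical all_reals all_analysis.
Set Implicit Arguments. Unset Strict Implicit. Unset Printing Implicit Defensive.
Import Order.TTheory GRing.Theory Num.Theory.
Local Open Scope classical_set_scope.
Local Open Scope ring_scope.

(* Points of R^d are d-tuples of reals (the type n.-tuple T carries, in
   MathComp-Analysis, the product sigma-algebra generated by the coordinate
   projections, i.e. the Borel sigma-algebra of R^d). *)

Definition box (R : realType) (d : nat) (a b : d.-tuple R) : set (d.-tuple R) :=
  [set x | forall k : 'I_d, tnth a k <= tnth x k <= tnth b k].

Definition box_interior (R : realType) (d : nat) (a b : d.-tuple R) : set (d.-tuple R) :=
  [set x | forall k : 'I_d, tnth a k < tnth x k < tnth b k].

Definition edge (R : realType) (d : nat) (a b : d.-tuple R) (k : 'I_d) : R :=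
  tnth b k - tnth a k.

(* L(B): maximal edge length (edges are >= 0 for genuine boxes) *)
Definition maxedge (R : realType) (d : nat) (a b : d.-tuple R) : R :=
  \big[Num.max/0]_(k < d) edge a b k.

(* l(B): minimal edge length; seeding the min with L(B) (which is >= every
   edge) makes this exactly the minimum of the edges when d >= 1. *)
Definition minedge (R : realType) (d : nat) (a b : d.-tuple R) : R :=
  \big[Num.min/maxedge a b]_(k < d) edge a b k.

Definition box_partition (R : realType) (d n : nat) (a b : d.-tuple R)
    (lo hi : 'I_n -> d.-tuple R) : Prop :=
  [/\ forall i k, tnth (lo i) k <= tnth (hi i) k,
      forall i, box (lo i) (hi i) `<=` box a b,
      [set x | exists i, box (lo i) (hi i) x] = box a b &
      forall i j, i != j -> box_interior (lo i) (hi i) `&` box_interior (lo j) (hi j) = set0].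

(* lam is (the Borel restriction of) d-dimensional Lebesgue measure: it gives
   every box its volume.  This determines lam uniquely on the sigma-algebra. *)
Definition is_lebesgue (R : realType) (d : nat)
    (lam : {measure set (d.-tuple R) -> \bar R}) : Prop :=
  forall a b : d.-tuple R, (forall k, tnth a k <= tnth b k) ->
    lam (box a b) = (\prod_(k < d) edge a b k)%:E.

From HB Require Import structures.
From mathcomp Require Import all_boot all_order all_algebra.
From mathcomp Require Import all_classical all_reals all_analysis.
From mathcomp Require Import measurable_realfun ring lra zify.
Import Order.TTheory GRing.Theory Num.Theory numFieldNormedType.Exports.
Set Implicit Arguments. Unset Strict Implicit. Unset Printing Implicit Defensive.
Local Open Scope classical_set_scope.
Local Open Scope ring_scope.

(* To cut a box into c pieces of equal mass, cut it
   orthogonally to the direction in which its edge is longest relative to the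
   corresponding edge of B, into two boxes carrying the fractions
   floor(c/2)/c and ceil(c/2)/c of its mass, and recurse.  Both fractions are
   at least 1/3 and the density lies between delta and 1/delta, so the cut
   edge keeps at least a delta^2/3 share of its length; since it was the
   largest relative edge, all relative edges of every piece stay within the
   factor K = 3/delta^2 of each other.  A final piece has mass mu(B)/n, so its
   volume relative to B lies between delta^2/n and delta^-2/n, and a product
   of d such K-comparable factors forces each of them to be of order
   n^(-1/d). *)

Section TupleUpdate.
Variables (T : Type) (d : nat).
Implicit Types (x : d.-tuple T) (k : 'I_d).

Definition tupdate x k (t : T) : d.-tuple T :=
  [tuple if j == k then t else tnth x j | j < d].

Lemma tnth_tupdate x k t j : tnth (tupdate x k t) j = if j == k then t else tnth x j.
Proof. by rewrite tnth_mktuple. Qed.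

Lemma tupdate_id x k : tupdate x k (tnth x k) = x.
Proof. by apply: eq_from_tnth => j; rewrite tnth_tupdate; case: eqP => [->|]. Qed.

Lemma tupdate_tupdate x k s t : tupdate (tupdate x k s) k t = tupdate x k t.
Proof. by apply: eq_from_tnth => j; rewrite !tnth_tupdate; case: eqP. Qed.

End TupleUpdate.

Section Boxes.
Variables (R : realType) (d : nat).
Implicit Types (a b lo hi x : d.-tuple R) (k : 'I_d) (s t : R).

Lemma measurable_box a b : measurable (box a b).
Proof.
have -> : box a b =
    \bigcap_(k in [set: 'I_d]) ((@tnth d R)^~ k @^-1` `[tnth a k, tnth b k]).
  apply/seteqP; split => x /= H k; first by move=> _ /=; rewrite in_itv /= H.
  by have := H k I; rewrite /= in_itv.
apply: fin_bigcap_measurable => [|k _]; first exact: finite_finset.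
by rewrite -[X in measurable X]setTI; apply: measurable_tnth => //; exact: measurable_itv.
Qed.

Lemma box_tupdate_hi lo hi k t : t <= tnth hi k ->
  box lo (tupdate hi k t) = box lo hi `&` [set x | tnth x k <= t].
Proof.
move=> thi; apply/seteqP; split => x /=.
- move=> H; have /andP[_ xt] : tnth lo k <= tnth x k <= t.
    by have := H k; rewrite tnth_tupdate eqxx.
  split => // j; have := H j; rewrite tnth_tupdate; case: eqP => [->|//].
  by move/andP=> [-> xt']; rewrite (le_trans xt' thi).
- move=> [H xt] j; rewrite tnth_tupdate; case: eqP => [->|_]; last exact: H.
  by have /andP[-> _] := H k.
Qed.

Lemma box_tupdate_lo lo hi k t : tnth lo k <= t ->
  box (tupdate lo k t) hi = box lo hi `&` [set x | t <= tnth x k].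
Proof.
move=> lot; apply/seteqP; split => x /=.
- move=> H; have /andP[tx _] : t <= tnth x k <= tnth hi k.
    by have := H k; rewrite tnth_tupdate eqxx.
  split => // j; have := H j; rewrite tnth_tupdate; case: eqP => [->|//].
  by move/andP=> [tx' ->]; rewrite (le_trans lot tx').
- move=> [H tx] j; rewrite tnth_tupdate; case: eqP => [->|_]; last exact: H.
  by have /andP[_ ->] := H k; rewrite tx.
Qed.

Lemma box_split lo hi k t : tnth lo k <= t <= tnth hi k ->
  box lo hi = box lo (tupdate hi k t) `|` box (tupdate lo k t) hi.
Proof.
move=> /andP[lot thi]; rewrite box_tupdate_hi // box_tupdate_lo // -setIUr.
by apply/esym/setIidl => x _; case: (leP (tnth x k) t) => [|/ltW] xt; [left|right].
Qed.

Lemma box_tupdate_face lo hi k t : tnth lo k <= t <= tnth hi k ->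
  box (tupdate lo k t) (tupdate hi k t) = box lo (tupdate hi k t) `&` box (tupdate lo k t) hi.
Proof.
move=> /andP[lot thi].
rewrite box_tupdate_hi // box_tupdate_lo // box_tupdate_hi //.
by apply/seteqP; split => x [[Bx ?] ?].
Qed.

End Boxes.

Section Volume.
Variables (R : realType) (d : nat).
Implicit Types (a b lo hi : d.-tuple R) (k : 'I_d) (s t : R).

Definition vol lo hi := \prod_(k < d) edge lo hi k.

Definition face_vol lo hi k := \prod_(j < d | j != k) edge lo hi j.

Lemma edge_tupdate lo hi k s t j :
  edge (tupdate lo k s) (tupdate hi k t) j = if j == k then t - s else edge lo hi j.
Proof. by rewrite /edge !tnth_tupdate; case: eqP. Qed.

Lemma vol_tupdate lo hi k s t :
  vol (tupdate lo k s) (tupdate hi k t) = (t - s) * face_vol lo hi k.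
Proof.
rewrite /vol (bigD1 k) //= edge_tupdate eqxx; congr (_ * _).
by apply: eq_bigr => j /negbTE jk; rewrite edge_tupdate jk.
Qed.

Lemma edge_tupdate_hi lo hi k t j :
  edge lo (tupdate hi k t) j = if j == k then t - tnth lo k else edge lo hi j.
Proof. by rewrite -{1}(tupdate_id lo k) edge_tupdate. Qed.

Lemma edge_tupdate_lo lo hi k s j :
  edge (tupdate lo k s) hi j = if j == k then tnth hi k - s else edge lo hi j.
Proof. by rewrite -{1}(tupdate_id hi k) edge_tupdate. Qed.

Lemma vol_tupdate_hi lo hi k t : vol lo (tupdate hi k t) = (t - tnth lo k) * face_vol lo hi k.
Proof. by rewrite -{1}(tupdate_id lo k) vol_tupdate. Qed.

Lemma vol_face lo hi k : vol lo hi = edge lo hi k * face_vol lo hi k.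
Proof. by rewrite -{1}(tupdate_id hi k) vol_tupdate_hi. Qed.

Lemma edge_bounds_minmax lo hi (X Y : R) : (0 < d)%N ->
  (forall k, tnth lo k <= tnth hi k) -> (forall k, X <= edge lo hi k <= Y) ->
  [/\ X <= minedge lo hi, minedge lo hi <= maxedge lo hi & maxedge lo hi <= Y].
Proof.
move=> d0 lh XY; pose k0 := Ordinal d0.
have maxk0 : edge lo hi k0 <= maxedge lo hi := le_bigmax _ _ _.
split.
- by apply: le_bigmin => [|k _]; [apply: le_trans maxk0; case/andP: (XY k0)|case/andP: (XY k)].
- by apply: le_trans maxk0; exact: bigmin_le.
- apply: bigmax_le => [|k _]; last by case/andP: (XY k).
  have /andP[_ k0Y] := XY k0; by apply: le_trans k0Y; rewrite subr_ge0.
Qed.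

Definition subbox a b lo hi := forall k,
  [/\ tnth a k <= tnth lo k, tnth lo k <= tnth hi k & tnth hi k <= tnth b k].

Lemma subbox_refl a b : (forall k, tnth a k <= tnth b k) -> subbox a b a b.
Proof. by move=> ab k; split. Qed.

Lemma subbox_trans a b lo hi lo' hi' :
  subbox a b lo hi -> subbox lo hi lo' hi' -> subbox a b lo' hi'.
Proof.
move=> S S' k; have [al _ hb] := S k; have [ll' ? h'h] := S' k.
by split => //; [exact: le_trans al ll'|exact: le_trans h'h hb].
Qed.

Lemma subbox_box a b lo hi : subbox a b lo hi -> box lo hi `<=` box a b.
Proof.
move=> S x Bx k; have [al _ hb] := S k; have /andP[lx xh] := Bx k.
by rewrite (le_trans al lx) (le_trans xh hb).
Qed.

Lemma subbox_tupdate_hi a b lo hi k t : subbox a b lo hi ->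
  tnth lo k <= t <= tnth hi k -> subbox a b lo (tupdate hi k t).
Proof.
move=> S /andP[lot thi] j; rewrite tnth_tupdate; case: eqP => [->|_]; last exact: S.
by have [? _ hb] := S k; split => //; exact: le_trans thi hb.
Qed.

Lemma subbox_tupdate_lo a b lo hi k t : subbox a b lo hi ->
  tnth lo k <= t <= tnth hi k -> subbox a b (tupdate lo k t) hi.
Proof.
move=> S /andP[lot thi] j; rewrite tnth_tupdate; case: eqP => [->|_]; last exact: S.
by have [al _ ?] := S k; split => //; exact: le_trans al lot.
Qed.

Lemma face_vol_ge0 a b lo hi k : subbox a b lo hi -> 0 <= face_vol lo hi k.
Proof. by move=> S; apply: prodr_ge0 => j _; rewrite subr_ge0; have [] := S j. Qed.

Lemma vol_ge0 a b lo hi : subbox a b lo hi -> 0 <= vol lo hi.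
Proof. by move=> S; apply: prodr_ge0 => j _; rewrite subr_ge0; have [] := S j. Qed.

Lemma measure_box_split (mu : {measure set (d.-tuple R) -> \bar R}) lo hi k t :
  tnth lo k <= t <= tnth hi k ->
  mu (box (tupdate lo k t) (tupdate hi k t)) = 0%E ->
  mu (box lo hi) = (mu (box lo (tupdate hi k t)) + mu (box (tupdate lo k t) hi))%E.
Proof.
move=> lth; rewrite box_tupdate_face // (box_split lth).
set A := box lo _; set B := box _ hi => AB0.
have mA : measurable A by exact: measurable_box.
have mB : measurable B by exact: measurable_box.
have BA : mu B = mu (B `\` A).
  have : mu B = (mu (B `\` A) + mu (B `&` A))%E := measureDI mu mB mA.
  by rewrite (setIC B A) AB0 adde0.
have -> : A `|` B = A `|` (B `\` A) by rewrite setUDr setDv setD0.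
rewrite measureU ?BA //; first exact: measurableD.
by rewrite setDE setICA setICr setI0.
Qed.

End Volume.

Section SeqPartition.
Variables (R : realType) (d : nat).
Implicit Types (a b lo hi : d.-tuple R) (s : seq (d.-tuple R * d.-tuple R)).

Definition interiors_disjoint (p q : d.-tuple R * d.-tuple R) : bool :=
  `[< box_interior p.1 p.2 `&` box_interior q.1 q.2 = set0 >].

Definition seq_box_partition lo hi s :=
  [/\ forall p, p \in s -> subbox lo hi p.1 p.2,
      forall x, box lo hi x -> exists2 p, p \in s & box p.1 p.2 x &
      pairwise interiors_disjoint s].

Lemma seq_box_partition1 lo hi :
  (forall k, tnth lo k <= tnth hi k) -> seq_box_partition lo hi [:: (lo, hi)].
Proof.
move=> lh; split => //=; last by move=> x Bx; exists (lo, hi); rewrite ?inE.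
by move=> p; rewrite inE => /eqP ->; exact: subbox_refl.
Qed.

Lemma seq_box_partition_cat lo hi k t s1 s2 :
  (forall j, tnth lo j <= tnth hi j) -> tnth lo k <= t <= tnth hi k ->
  seq_box_partition lo (tupdate hi k t) s1 -> seq_box_partition (tupdate lo k t) hi s2 ->
  seq_box_partition lo hi (s1 ++ s2).
Proof.
move=> lh lth [sub1 cov1 dis1] [sub2 cov2 dis2]; split.
- move=> p; rewrite mem_cat => /orP[] ps.
    exact: subbox_trans (subbox_tupdate_hi (subbox_refl lh) lth) (sub1 p ps).
  exact: subbox_trans (subbox_tupdate_lo (subbox_refl lh) lth) (sub2 p ps).
- move=> x; rewrite (box_split lth) => -[/cov1|/cov2] [p ps px];
    by exists p => //; rewrite mem_cat ps ?orbT.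
- rewrite pairwise_cat dis1 dis2 !andbT; apply/allrelP => p q ps qs.
  apply/asboolP/seteqP; split => x //= [px qx].
  have [_ _] := sub1 p ps k; have [] := sub2 q qs k; rewrite !tnth_tupdate eqxx => tq _ _ pt.
  have /andP[_ xp] := px k; have /andP[qx' _] := qx k.
  by have := lt_trans (lt_le_trans xp pt) (le_lt_trans tq qx'); rewrite ltxx.
Qed.

Lemma box_partition_nth a b s n : seq_box_partition a b s -> size s = n ->
  box_partition a b (fun i : 'I_n => (nth (a, b) s i).1) (fun i => (nth (a, b) s i).2).
Proof.
move=> [sub cov dis] sz; have ins (i : 'I_n) : nth (a, b) s i \in s by rewrite mem_nth ?sz.
split.
- by move=> i k; have [] := sub _ (ins i) k.
- by move=> i; exact: subbox_box (sub _ (ins i)).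
- apply/seteqP; split => x /=; first by move=> [i Bx]; exact: subbox_box (sub _ (ins i)) _ Bx.
  move=> /cov [p ps px]; have ip : (index p s < n)%N by rewrite -sz index_mem.
  by exists (Ordinal ip); rewrite /= nth_index.
- move=> i j ij; have /pairwiseP dis' := dis.
  have lts (l : 'I_n) : (l : nat) \in gtn (size s) by rewrite inE sz.
  case: (ltngtP i j) => [lij|lji|eij].
  + exact/asboolP/dis'.
  + by rewrite setIC; exact/asboolP/dis'.
  + by move: ij; rewrite (val_inj eij) eqxx.
Qed.

End SeqPartition.

Lemma lipschitz_continuous (R : realFieldType) (f : R -> R) (L : R) : 0 <= L ->
  (forall x y, `|f x - f y| <= L * `|x - y|) -> continuous f.
Proof.
move=> L0 fL x; apply/cvgrPdist_le => e e0.
have eL0 : 0 < e / (L + 1) by rewrite divr_gt0 // ltr_wpDl.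
near=> y; apply: (le_trans (fL x y)).
have : `|x - y| <= e / (L + 1).
  by near: y; apply: (@cvgr_dist_le _ _ _ _ _ id x) => //; exact: cvg_id.
move=> xy; apply: le_trans (ler_wpM2l L0 xy) _.
by rewrite mulrA ler_pdivrMr ?ltr_wpDl // mulrC ler_wpM2l ?ltW // ltrDl.
Unshelve. all: by end_near.
Qed.

Section Clamp.
Variable R : realFieldType.
Implicit Types l u t x y : R.

Definition clamp l u t := if t <= l then l else if u <= t then u else t.

Lemma clamp_in l u t : l <= u -> l <= clamp l u t <= u.
Proof. by rewrite /clamp; case: (leP t l); case: (leP u t); lra. Qed.

Lemma clamp_id l u t : l <= t <= u -> clamp l u t = t.
Proof. by rewrite /clamp; case: (leP t l); case: (leP u t); lra. Qed.

Lemma clamp_subr_bounds l u x y : l <= u -> x <= y ->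
  0 <= clamp l u y - clamp l u x <= y - x.
Proof.
by rewrite /clamp; case: (leP x l); case: (leP u x); case: (leP y l); case: (leP u y); lra.
Qed.

End Clamp.

Lemma comparable_shrink_max (R : realDomainType) (I : eqType) (r r' : I -> R) (K : R) k :
  1 <= K -> (forall i j, r i <= K * r j) -> (forall j, r j <= r k) ->
  (forall j, j != k -> r' j = r j) -> 0 <= r' k <= r k -> r k <= K * r' k ->
  forall i j, r' i <= K * r' j.
Proof.
move=> K1 rK rk r'r /andP[r'k0 r'k] rkK i j.
case: (eqVneq i k) => [->|ik]; case: (eqVneq j k) => [->|jk].
- by rewrite ler_peMl.
- by rewrite (r'r j jk); exact: le_trans r'k (rK k j).
- by rewrite (r'r i ik); exact: le_trans (rk i) rkK.
- by rewrite (r'r i ik) (r'r j jk).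
Qed.

Lemma comparable_prod_bounds (R : realFieldType) (d : nat) (r : 'I_d -> R) (K D nu : R) :
  (0 < d)%N -> 1 <= K -> 1 <= D -> 0 < nu ->
  (forall j, 0 <= r j) -> (forall i j, r i <= K * r j) ->
  (D * nu ^+ d)^-1 <= \prod_(j < d) r j <= D / nu ^+ d ->
  forall j, (K * D * nu)^-1 <= r j <= K * D / nu.
Proof.
move=> d0 K1 D1 nu0 r0 rK /andP[lo hi] j.
have K0 : 0 < K by lra.
have D0 : 0 < D by lra.
have DD : D <= D ^+ d by exact: ler_eXnr.
have ord_d : has xpredT (index_enum 'I_d).
  by apply/hasP; exists (Ordinal d0); rewrite ?mem_index_enum.
apply/andP; split; rewrite leNgt; apply/negP => rj.
- have small i : r i < (D * nu)^-1.
    apply: le_lt_trans (rK i j) _.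
    have -> : (D * nu)^-1 = K * (K * D * nu)^-1 by field; rewrite !gt_eqF.
    by rewrite ltr_pM2l.
  have : \prod_(i < d) r i < (D * nu)^-1 ^+ d.
    have -> : (D * nu)^-1 ^+ d = \prod_(i < d) (D * nu)^-1 by rewrite prodr_const card_ord.
    by apply: ltr_prod => // i _; rewrite r0 small.
  rewrite exprVn exprMn; apply/negP; rewrite -leNgt (le_trans _ lo) //.
  by rewrite lef_pV2 ?posrE ?mulr_gt0 ?exprn_gt0 // ler_pM2r ?exprn_gt0.
- have large i : D / nu < r i.
    rewrite -(ltr_pM2l K0); apply: lt_le_trans (rK j i).
    by rewrite mulrA.
  have : (D / nu) ^+ d < \prod_(i < d) r i.
    have -> : (D / nu) ^+ d = \prod_(i < d) (D / nu) by rewrite prodr_const card_ord.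
    apply: ltr_prod => // i _.
    by rewrite large divr_ge0 ?ltW.
  rewrite exprMn exprVn; apply/negP; rewrite -leNgt (le_trans hi) //.
  by rewrite ler_pM2r ?invr_gt0 ?exprn_gt0.
Qed.

Lemma density_ratio_bounds (R : realFieldType) (delta V v M c : R) :
  0 < delta -> 0 < V -> 0 < c ->
  delta * V <= M <= delta^-1 * V -> delta * v <= M / c <= delta^-1 * v ->
  ((delta ^+ 2)^-1 * c)^-1 <= v / V <= (delta ^+ 2)^-1 / c.
Proof.
move=> d0 V0 c0 /andP[VM MV] /andP[vM Mv].
have c'0 : 0 < c^-1 by rewrite invr_gt0.
have d'0 : 0 < delta^-1 by rewrite invr_gt0.
have lo : delta * (delta * V / c) <= v.
  have := ler_wpM2l (ltW d0) (le_trans (ler_wpM2r (ltW c'0) VM) Mv).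
  by rewrite mulVKf ?gt_eqF.
have hi : v <= delta^-1 * (delta^-1 * V / c).
  have := ler_wpM2l (ltW d'0) (le_trans vM (ler_wpM2r (ltW c'0) MV)).
  by rewrite mulKf ?gt_eqF.
rewrite invfM invrK ler_pdivlMr // ler_pdivrMr //; apply/andP; split.
- by rewrite (_ : _ * V = delta * (delta * V / c)) //; ring.
- by rewrite (_ : _ * V = delta^-1 * (delta^-1 * V / c)) //; field; rewrite !gt_eqF.
Qed.

Lemma exprn_powR_inv (R : realType) (x : R) (d : nat) : (0 < d)%N -> 0 <= x ->
  (x `^ (d%:R)^-1) ^+ d = x.
Proof.
move=> d0 x0; rewrite -powR_mulrn ?powR_ge0 // -powRrM mulVf ?powRr1 //.
by rewrite pnatr_eq0 -lt0n.
Qed.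

Lemma ge1_mul3_frac (R : realFieldType) (p q : nat) : (0 < q)%N -> (q <= 3 * p)%N ->
  1 <= 3 * (p%:R / q%:R) :> R.
Proof. by move=> q0 qp; rewrite mulrA ler_pdivlMr ?ltr0n // mul1r -natrM ler_nat. Qed.

Definition aspect_bound (R : realFieldType) (delta : R) := 3 / delta ^+ 2.

Lemma le_aspect_bound (R : realFieldType) (delta e e' P M M' : R) : 0 < delta -> 0 < P ->
  delta * (e * P) <= M -> M <= 3 * M' -> M' <= delta^-1 * (e' * P) ->
  e <= aspect_bound delta * e'.
Proof.
move=> d0 P0 eM MM' M'e'.
have eP : delta * (e * P) <= 3 * (delta^-1 * (e' * P)).
  by apply: le_trans eM (le_trans MM' _); rewrite ler_pM2l ?ltr0n.
rewrite -(ler_pM2r P0) -(ler_pM2l (exprn_gt0 2 d0)).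
have -> : delta ^+ 2 * (e * P) = delta * (delta * (e * P)) by rewrite expr2 -mulrA.
have -> : delta ^+ 2 * (aspect_bound delta * e' * P) = delta * (3 * (delta^-1 * (e' * P))).
  by rewrite /aspect_bound; field; rewrite gt_eqF.
by rewrite ler_pM2l.
Qed.

Section DensityMass.
Variables (R : realType) (d : nat) (delta : R) (a b : d.-tuple R)
  (lam mu : {measure set (d.-tuple R) -> \bar R}) (h : d.-tuple R -> R).
Hypotheses (delta0 : 0 < delta) (lamE : is_lebesgue lam) (mh : measurable_fun setT h)
  (h0 : forall x, 0 <= h x) (hB : forall x, box a b x -> delta <= h x <= delta^-1)
  (muE : forall A, measurable A -> mu A = (\int[lam]_(x in A) (h x)%:E)%E).
Implicit Types (lo hi : d.-tuple R) (k : 'I_d) (t : R).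

Lemma measure_box_bounds lo hi : subbox a b lo hi ->
  ((delta * vol lo hi)%:E <= mu (box lo hi) <= (delta^-1 * vol lo hi)%:E)%E.
Proof.
move=> S; have lh k : tnth lo k <= tnth hi k by have [] := S k.
have mB := measurable_box lo hi.
rewrite muE // !EFinM -lamE // -!integral_cst //.
apply/andP; split; apply: ge0_le_integral => //;
  try (by move=> x _; rewrite /= lee_fin ?invr_ge0 ?ltW);
  try (by apply: (proj2 (measurable_EFinP _ h)); exact: measurable_funTS).
all: by move=> x Bx; rewrite /= lee_fin; have /andP[] := hB (subbox_box S Bx).
Qed.

Definition mass lo hi := fine (mu (box lo hi)).

Lemma massE lo hi : subbox a b lo hi -> mu (box lo hi) = (mass lo hi)%:E.
Proof.
by move=> /measure_box_bounds /andP[]; rewrite /mass; case: (mu (box lo hi)).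
Qed.

Lemma mass_bounds lo hi : subbox a b lo hi ->
  delta * vol lo hi <= mass lo hi <= delta^-1 * vol lo hi.
Proof. by move=> S; have := measure_box_bounds S; rewrite massE // !lee_fin. Qed.

Lemma mass_split lo hi k t : subbox a b lo hi -> tnth lo k <= t <= tnth hi k ->
  mass lo hi = mass lo (tupdate hi k t) + mass (tupdate lo k t) hi.
Proof.
move=> S lth; have Sface : subbox a b (tupdate lo k t) (tupdate hi k t).
  apply: subbox_tupdate_hi (subbox_tupdate_lo S lth) _.
  by rewrite tnth_tupdate eqxx lexx; case/andP: lth.
have face0 : mu (box (tupdate lo k t) (tupdate hi k t)) = 0%E.
  have /andP[_] := measure_box_bounds Sface; rewrite vol_tupdate subrr mul0r mulr0 => face_le0.
  by apply/eqP; rewrite eq_le face_le0 measure_ge0.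
have := measure_box_split lth face0.
rewrite (massE S) (massE (subbox_tupdate_hi S lth)) (massE (subbox_tupdate_lo S lth)).
by move=> -[].
Qed.

End DensityMass.

Section BalancedBisection.
Variables (R : realType) (d : nat) (delta : R) (a b : d.-tuple R)
  (m : d.-tuple R -> d.-tuple R -> R).
Hypotheses (d0 : (0 < d)%N) (delta0 : 0 < delta) (ab : forall k, tnth a k < tnth b k)
  (m_vol : forall lo hi, subbox a b lo hi ->
     delta * vol lo hi <= m lo hi <= delta^-1 * vol lo hi)
  (m_split : forall lo hi k t, subbox a b lo hi -> tnth lo k <= t <= tnth hi k ->
     m lo hi = m lo (tupdate hi k t) + m (tupdate lo k t) hi).
Implicit Types (lo hi : d.-tuple R) (k : 'I_d) (s t : R).

Local Notation K := (aspect_bound delta).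

Lemma edge_ab_gt0 k : 0 < edge a b k.
Proof. by rewrite subr_gt0. Qed.

Lemma subbox_ab : subbox a b a b.
Proof. by apply: subbox_refl => k; exact: ltW. Qed.

Lemma delta_le1 : delta <= 1.
Proof.
have /andP[lo hi] := m_vol subbox_ab.
have V0 : 0 < vol a b by apply: prodr_gt0 => k _; exact: edge_ab_gt0.
have : delta ^+ 2 <= 1.
  have := ler_wpM2l (ltW delta0) (le_trans lo hi); rewrite !mulrA mulfV ?gt_eqF //.
  by rewrite ler_pM2r // mul1r expr2.
by rewrite expr_le1 // ltW.
Qed.

Lemma aspect_bound_ge1 : 1 <= K.
Proof.
rewrite /aspect_bound ler_pdivlMr ?exprn_gt0 // mul1r.
have : delta ^+ 2 <= 1 by rewrite expr_le1 ?delta_le1 // ltW.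
lra.
Qed.

Lemma m_ge0 lo hi : subbox a b lo hi -> 0 <= m lo hi.
Proof.
move=> S; have /andP[+ _] := m_vol S; apply: le_trans.
by rewrite mulr_ge0 ?(ltW delta0) ?(vol_ge0 S).
Qed.

Lemma m_tupdate_hi_sub lo hi k s t : subbox a b lo hi ->
  tnth lo k <= s -> s <= t -> t <= tnth hi k ->
  0 <= m lo (tupdate hi k t) - m lo (tupdate hi k s) <= delta^-1 * face_vol lo hi k * (t - s).
Proof.
move=> S ls st th.
have lth : tnth lo k <= t <= tnth hi k by rewrite th (le_trans ls st).
have lst : tnth lo k <= s <= tnth (tupdate hi k t) k by rewrite tnth_tupdate eqxx ls st.
have St := subbox_tupdate_hi S lth.
rewrite (m_split St lst) tupdate_tupdate addrC addKr.
have /andP[lo_m m_hi] := m_vol (subbox_tupdate_lo St lst).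
rewrite vol_tupdate mulrCA mulrC in m_hi; rewrite m_hi andbT (le_trans _ lo_m) //.
by rewrite mulr_ge0 ?(ltW delta0) // vol_tupdate mulr_ge0 ?subr_ge0 ?(face_vol_ge0 _ S).
Qed.

Lemma m_cut lo hi k y : subbox a b lo hi -> 0 <= y <= m lo hi ->
  exists2 t, tnth lo k <= t <= tnth hi k & m lo (tupdate hi k t) = y.
Proof.
move=> S /andP[y0 ym]; have [_ lh _] := S k.
(* Clamping the cut position makes [g] Lipschitz on the whole line. *)
pose g t := m lo (tupdate hi k (clamp (tnth lo k) (tnth hi k) t)).
have L0 : 0 <= delta^-1 * face_vol lo hi k.
  by rewrite mulr_ge0 ?invr_ge0 ?(ltW delta0) ?(face_vol_ge0 _ S).
have g_lip x z : `|g x - g z| <= delta^-1 * face_vol lo hi k * `|x - z|.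
  wlog xz : x z / x <= z.
    by move=> H; case: (leP x z) => [/H //|/ltW/H]; rewrite distrC [`|z - x|]distrC.
  have /andP[c0 cxz] := clamp_subr_bounds lh xz.
  have /andP[lx _] := clamp_in x lh; have /andP[_ zh] := clamp_in z lh.
  have cxcz : clamp (tnth lo k) (tnth hi k) x <= clamp (tnth lo k) (tnth hi k) z.
    by rewrite -subr_ge0.
  have /andP[g0 gxz] := m_tupdate_hi_sub S lx cxcz zh.
  rewrite distrC ger0_norm // [`|x - z|]distrC ger0_norm ?subr_ge0 //.
  exact: le_trans gxz (ler_wpM2l L0 cxz).
have g_lo : g (tnth lo k) = 0.
  rewrite /g clamp_id ?lexx ?lh //.
  have lk : tnth lo k <= tnth lo k <= tnth hi k by rewrite lexx lh.
  have := m_vol (subbox_tupdate_hi S lk); rewrite vol_tupdate_hi subrr mul0r !mulr0.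
  by move=> /andP[? ?]; apply/eqP; rewrite eq_le; apply/andP.
have g_hi : g (tnth hi k) = m lo hi by rewrite /g clamp_id ?lexx ?lh // tupdate_id.
have [|c] := IVT lh (continuous_subspaceT (lipschitz_continuous L0 g_lip)) (v := y).
  by rewrite g_lo g_hi (min_idPl (le_trans y0 ym)) (max_idPr (le_trans y0 ym)) y0 ym.
by rewrite in_itv /= /g => lch gc; exists c => //; rewrite -(clamp_id lch).
Qed.

Definition rel_edge lo hi k := edge lo hi k / edge a b k.

Definition balanced lo hi := forall i j, rel_edge lo hi i <= K * rel_edge lo hi j.

Lemma balanced_ab : balanced a b.
Proof.
by move=> i j; rewrite /rel_edge !divff ?lt0r_neq0 ?edge_ab_gt0 // mulr1 aspect_bound_ge1.
Qed.

Lemma balanced_child lo hi lo' hi' k : subbox a b lo hi ->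
  (forall j, tnth lo j < tnth hi j) -> balanced lo hi ->
  (forall j, rel_edge lo hi j <= rel_edge lo hi k) ->
  subbox lo hi lo' hi' -> (forall j, j != k -> edge lo' hi' j = edge lo hi j) ->
  m lo hi <= 3 * m lo' hi' -> 0 < edge lo' hi' k /\ balanced lo' hi'.
Proof.
move=> S lh B kmax S' e'e m_le.
have P0 : 0 < face_vol lo hi k by apply: prodr_gt0 => j _; rewrite subr_gt0.
have P'P : face_vol lo' hi' k = face_vol lo hi k by apply: eq_bigr => j /e'e.
have /andP[V_m _] := m_vol S; have /andP[_ m_V'] := m_vol (subbox_trans S S').
rewrite (vol_face _ _ k) in V_m; rewrite (vol_face _ _ k) P'P in m_V'.
have eK := le_aspect_bound delta0 P0 V_m m_le m_V'.
have e'0 : 0 < edge lo' hi' k.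
  have : 0 < K * edge lo' hi' k by apply: lt_le_trans eK; rewrite subr_gt0.
  by rewrite pmulr_rgt0 // (lt_le_trans ltr01 aspect_bound_ge1).
split=> //; apply: comparable_shrink_max aspect_bound_ge1 B kmax _ _ _.
- by move=> j /e'e; rewrite /rel_edge => ->.
- rewrite /rel_edge divr_ge0 ?(ltW e'0) ?(ltW (edge_ab_gt0 k)) //=.
  rewrite ler_pM2r ?invr_gt0 ?edge_ab_gt0 //.
  by have [? _ ?] := S' k; apply: lerB.
- by rewrite /rel_edge mulrA ler_pM2r ?invr_gt0 ?edge_ab_gt0.
Qed.

Lemma balanced_bisect lo hi theta : subbox a b lo hi ->
  (forall k, tnth lo k < tnth hi k) -> balanced lo hi ->
  1 <= 3 * theta -> 1 <= 3 * (1 - theta) ->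
  exists k t, [/\ tnth lo k < t < tnth hi k,
    m lo (tupdate hi k t) = theta * m lo hi,
    m (tupdate lo k t) hi = (1 - theta) * m lo hi,
    balanced lo (tupdate hi k t) & balanced (tupdate lo k t) hi].
Proof.
move=> S lh B th1 th2; have lh' j : tnth lo j <= tnth hi j by exact: ltW.
have [k kmax] : exists k, forall j, rel_edge lo hi j <= rel_edge lo hi k.
  have [k _ kmax] := arg_maxP (rel_edge lo hi) (isT : xpredT (Ordinal d0)).
  by exists k => j; exact: kmax.
have m0 := m_ge0 S.
have [|t lth mL] := m_cut k S (y := theta * m lo hi).
  by rewrite mulr_ge0 ?ler_piMl //=; lra.
have mR : m (tupdate lo k t) hi = (1 - theta) * m lo hi.
  by have e := m_split S lth; rewrite mL in e; rewrite mulrBl mul1r {1}e; ring.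
have m3 th : 1 <= 3 * th -> m lo hi <= 3 * (th * m lo hi).
  by move=> th3; rewrite mulrA -[X in X <= _]mul1r ler_wpM2r.
have offL j : j != k -> edge lo (tupdate hi k t) j = edge lo hi j.
  by move=> /negbTE jk; rewrite edge_tupdate_hi jk.
have offR j : j != k -> edge (tupdate lo k t) hi j = edge lo hi j.
  by move=> /negbTE jk; rewrite edge_tupdate_lo jk.
have mL3 : m lo hi <= 3 * m lo (tupdate hi k t) by rewrite mL; exact: m3.
have mR3 : m lo hi <= 3 * m (tupdate lo k t) hi by rewrite mR; exact: m3.
have [eL BL] := balanced_child S lh B kmax (subbox_tupdate_hi (subbox_refl lh') lth) offL mL3.
have [eR BR] := balanced_child S lh B kmax (subbox_tupdate_lo (subbox_refl lh') lth) offR mR3.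
rewrite edge_tupdate_hi eqxx subr_gt0 in eL; rewrite edge_tupdate_lo eqxx subr_gt0 in eR.
by exists k, t; rewrite eL eR.
Qed.

Lemma balanced_partition c lo hi : (0 < c)%N -> subbox a b lo hi ->
  (forall k, tnth lo k < tnth hi k) -> balanced lo hi ->
  exists s : seq (d.-tuple R * d.-tuple R), [/\ size s = c, seq_box_partition lo hi s &
    forall p, p \in s -> [/\ forall k, tnth p.1 k < tnth p.2 k, balanced p.1 p.2
                           & m p.1 p.2 = m lo hi / c%:R]].
Proof.
elim/ltn_ind: c lo hi => c IH lo hi c0 S lh B.
have lh' k : tnth lo k <= tnth hi k by exact: ltW.
have [->|c_neq1] := eqVneq c 1%N.
  exists [:: (lo, hi)]; split => //; first exact: seq_box_partition1.
  by move=> p; rewrite inE => /eqP -> /=; rewrite divr1.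
have c_gt1 : (1 < c)%N by rewrite ltn_neqAle eq_sym c_neq1 c0.
set c1 := (c %/ 2)%N; set c2 := (c - c1)%N.
have c1_gt0 : (0 < c1)%N by rewrite /c1; lia.
have c2_gt0 : (0 < c2)%N by rewrite /c2 /c1; lia.
have c1_lt : (c1 < c)%N by rewrite /c1; lia.
have c2_lt : (c2 < c)%N by rewrite /c2 /c1; lia.
have cE : c = (c1 + c2)%N by rewrite /c2 /c1; lia.
have cR : (0 : R) < c%:R by rewrite ltr0n.
have cRE : c%:R = c1%:R + c2%:R :> R by rewrite -natrD -cE.
have th1 : 1 <= 3 * (c1%:R / c%:R) :> R by apply: ge1_mul3_frac; rewrite /c1; lia.
have th2 : 1 <= 3 * (1 - c1%:R / c%:R) :> R.
  rewrite (_ : 1 - _ = c2%:R / c%:R); last by rewrite cRE; field; rewrite -cRE gt_eqF.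
  by apply: ge1_mul3_frac; rewrite /c2 /c1; lia.
have [k [t [/andP[lot thi] mL mR BL BR]]] := balanced_bisect S lh B th1 th2.
have lth : tnth lo k <= t <= tnth hi k by rewrite !ltW.
have ltL j : tnth lo j < tnth (tupdate hi k t) j by rewrite tnth_tupdate; case: eqP => [->|].
have ltR j : tnth (tupdate lo k t) j < tnth hi j by rewrite tnth_tupdate; case: eqP => [->|].
have [s1 [sz1 P1 Q1]] := IH c1 c1_lt _ _ c1_gt0 (subbox_tupdate_hi S lth) ltL BL.
have [s2 [sz2 P2 Q2]] := IH c2 c2_lt _ _ c2_gt0 (subbox_tupdate_lo S lth) ltR BR.
exists (s1 ++ s2); split; first by rewrite size_cat sz1 sz2 -cE.
  exact: seq_box_partition_cat lh' lth P1 P2.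
move=> p; rewrite mem_cat => /orP[/Q1|/Q2] [ltp Bp ->]; split=> //.
- by rewrite mL; field; rewrite !gt_eqF ?ltr0n.
- by rewrite mR cRE; field; rewrite -cRE !gt_eqF ?ltr0n.
Qed.

Lemma balanced_edge_bounds n lo hi : (0 < n)%N -> subbox a b lo hi -> balanced lo hi ->
  m lo hi = m a b / n%:R -> forall j,
  minedge a b / (K / delta ^+ 2 * n%:R `^ (d%:R)^-1) <= edge lo hi j
  <= K / delta ^+ 2 / n%:R `^ (d%:R)^-1 * maxedge a b.
Proof.
move=> n0 S B mn j; set nu := n%:R `^ _.
have nR : (0 : R) < n%:R by rewrite ltr0n.
have nu0 : 0 < nu by rewrite powR_gt0.
have V0 : 0 < vol a b by apply: prodr_gt0 => k _; exact: edge_ab_gt0.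
have D1 : 1 <= (delta ^+ 2)^-1.
  by rewrite invf_ge1 ?exprn_gt0 // expr_le1 ?delta_le1 // ltW.
have /andP[lo_m m_hi] := m_vol S; rewrite mn in lo_m m_hi.
have := density_ratio_bounds delta0 V0 nR (m_vol subbox_ab) (introT andP (conj lo_m m_hi)).
rewrite /vol -prodf_div -(exprn_powR_inv d0 (ltW nR)) -/nu => rel_prod.
have r0 i : 0 <= rel_edge lo hi i.
  by have [_ lh _] := S i; apply: divr_ge0; [rewrite subr_ge0|exact: ltW (edge_ab_gt0 i)].
have /andP[r_lo r_hi] := comparable_prod_bounds d0 aspect_bound_ge1 D1 nu0 r0 B rel_prod j.
have eB0 := ltW (edge_ab_gt0 j).
rewrite -(divfK (lt0r_neq0 (edge_ab_gt0 j)) (edge lo hi j)) -/(rel_edge lo hi j).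
apply/andP; split.
- apply: le_trans (ler_wpM2r eB0 r_lo); rewrite mulrC ler_wpM2l ?invr_ge0 //.
    by rewrite ltW // !mulr_gt0 ?invr_gt0 ?exprn_gt0 // (lt_le_trans ltr01 aspect_bound_ge1).
  exact: bigmin_le.
- apply: le_trans (ler_wpM2r eB0 r_hi) _; rewrite ler_wpM2l //; last exact: le_bigmax.
  by rewrite ltW // !mulr_gt0 ?invr_gt0 ?exprn_gt0 // (lt_le_trans ltr01 aspect_bound_ge1).
Qed.

End BalancedBisection.

Theorem lemma2p6 (R : realType) (d : nat) (delta : R) :
  (0 < d)%N -> 0 < delta ->
  exists C : R, 0 < C /\
  forall (a b : d.-tuple R) (n : nat)
         (lam : {measure set (d.-tuple R) -> \bar R})
         (h : d.-tuple R -> R)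
         (mu : {measure set (d.-tuple R) -> \bar R}),
    (forall k, tnth a k < tnth b k) ->
    (0 < n)%N ->
    is_lebesgue lam ->
    measurable_fun [set: d.-tuple R] h ->
    (forall x, 0 <= h x) ->
    (forall x, box a b x -> delta <= h x <= delta^-1) ->
    (forall A, measurable A -> mu A = (\int[lam]_(x in A) (h x)%:E)%E) ->
    exists lo hi : 'I_n -> d.-tuple R,
      box_partition a b lo hi /\
      forall i : 'I_n,
        [/\ mu (box (lo i) (hi i)) = ((n%:R)^-1%:E * mu (box a b))%E,
            minedge a b / (C * (n%:R `^ (d%:R)^-1)) <= minedge (lo i) (hi i),
            minedge (lo i) (hi i) <= maxedge (lo i) (hi i) &
            maxedge (lo i) (hi i) <= C / (n%:R `^ (d%:R)^-1) * maxedge a b].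
Proof.
move=> d0 delta0; exists (aspect_bound delta / delta ^+ 2).
split; first by rewrite !divr_gt0 ?exprn_gt0.
move=> a b n lam h mu ab n0 lamE mh h0 hB muE.
have m_vol := mass_bounds delta0 lamE mh h0 hB muE.
have m_split := mass_split delta0 lamE mh h0 hB muE.
have Sab := subbox_ab ab; have Bab := balanced_ab delta0 ab m_vol.
have [s [sz part Ps]] := balanced_partition d0 delta0 ab m_vol m_split n0 Sab ab Bab.
exists (fun i => (nth (a, b) s i).1), (fun i => (nth (a, b) s i).2).
split=> [|i]; first exact: box_partition_nth.
have ps : nth (a, b) s i \in s by rewrite mem_nth ?sz.
have [_ Bp mp] := Ps _ ps; have [sub_s _ _] := part; have Sp := sub_s _ ps.
have lh k : tnth (nth (a, b) s i).1 k <= tnth (nth (a, b) s i).2 k by have [] := Sp k.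
have [? ? ?] := edge_bounds_minmax d0 lh
  (balanced_edge_bounds d0 delta0 ab m_vol n0 Sp Bp mp).
split=> //; rewrite (massE delta0 lamE mh h0 hB muE Sp).
by rewrite (massE delta0 lamE mh h0 hB muE Sab) mp -EFinM mulrC.
Qed.
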